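(* Let $\theta,\theta'$ be real antisymmetric $n\times n$ matrices and $l\ge 1$. Let $\bar C^l\subset C^l=\mathrm{Hom}(B^l(A_\theta),A_{\theta'}[1])$ be the subcomplex of normal cochains. Then $H^k(\bar C^l)=0$ for all $k>0$; in particular $H^1(\bar C^l)=0$.
   Context: For a real antisymmetric $n\times n$ matrix $\theta$, $A_\theta$ is the unital dg-algebra over $\mathbb{R}$ generated by $x^1,\dots,x^n$ (degree $0$) and $\xi^1,\dots,\xi^n$ (degree $1$) with relations $x^ix^j-x^jx^i=\theta^{ij}$, $x^i\xi^j=\xi^jx^i$, $\xi^i\xi^j=0$, and differential $dx^i=\xi^i$, $d\xi^i=0$ (graded Leibniz rule). As a vector space $A_\theta$ is the space of polynomials $a_0(x)+a_i(x)\xi^i$ in commuting $x$'s at most linear in the $\xi$'s. $A_\theta[1]$ is the degree shift ($A_\theta[1]_k=(A_\theta)_{k+1}$), $B^l(A_\theta)=A_\theta[1]^{\otimes l}$ carries the differential induced by $d$ (with Koszul signs), and $C^l=\bigoplus_k\mathrm{Hom}^k(B^l(A_\theta),A_{\theta'}[1])$, where $\mathrm{Hom}^k$ consists of linear maps raising degree by $k$, with differential $d_l(f)=f\circ d$. A cochain $f\in C^l$ is normal if $f(a_1,\dots,a_l)=0$ whenever some $a_i$ equals $1\in A_\theta$; normal cochains form a subcomplex $\bar C^l$. *)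

From HB Require Import structures.
From mathcomp Require Import all_boot all_order all_algebra.
From mathcomp Require Import mpoly.
From mathcomp Require Import reals.

Set Implicit Arguments.
Unset Strict Implicit.
Unset Printing Implicit Defensive.

Import Order.TTheory GRing.Theory Num.Theory.
Local Open Scope ring_scope.

Section NCSpace.
Variables (R : realType) (n : nat).

Definition antisym (theta : 'M[R]_n) : Prop := theta^T = - theta.

(* Underlying graded vector space of A_theta: an element a_0(x) + a_i(x) xi^i is
   the pair (a_0, (a_i)_i); degree-0 part = first component, degree-1 part =
   second component.  The (graded) vector space, unit and differential do not
   depend on theta; theta only enters the product, which plays no role in the
   complex C^l. *)
Definition Aspace : Type := ({mpoly R[n]} * {ffun 'I_n -> {mpoly R[n]}})%type.
Definition A (theta : 'M[R]_n) : lmodType R := Aspace.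

Definition Aone (theta : 'M[R]_n) : A theta := (1, 0).

(* differential d(a_0 + a_i xi^i) = (d_j a_0) xi^j, since dx^j = xi^j, xi^i xi^j = 0
   and the xi's are central. *)
Definition Ad (theta : 'M[R]_n) (a : A theta) : A theta :=
  (0, [ffun j => mderiv j a.1]).

Definition Ahomog (theta : 'M[R]_n) (t : int) (a : A theta) : bool :=
  if t == 0 then a.2 == 0 else if t == 1 then a.1 == 0 else a == 0.

(* Koszul sign operator on A[1]: a |-> (-1)^{|a|_{A[1]}} a, where the degree in
   A[1] is the degree in A minus one. *)
Definition Asign (theta : 'M[R]_n) (a : A theta) : A theta := (- a.1, a.2).

End NCSpace.

Section Cochains.
Variables (R : realType) (n l : nat) (theta theta' : 'M[R]_n).

(* Linear maps B^l(A_theta) = A_theta[1]^{(x) l} -> A_theta'[1] are identified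
   (universal property of the tensor product) with l-multilinear maps. *)
Definition upd (a : 'I_l -> A theta) (i : 'I_l) (x : A theta) : 'I_l -> A theta :=
  fun j => if j == i then x else a j.

Definition multilinear (f : ('I_l -> A theta) -> A theta') : Prop :=
  forall (a : 'I_l -> A theta) (i : 'I_l) (c : R) (x y : A theta),
    f (upd a i (c *: x + y)) = c *: f (upd a i x) + f (upd a i y).

(* f is in Hom^k: on homogeneous inputs a_i of A-degree e_i (i.e. A[1]-degree
   e_i - 1), the output has A[1]-degree sum_i (e_i - 1) + k, i.e. A-degree
   sum_i e_i - l + k + 1. *)
Definition homCochain (k : int) (f : ('I_l -> A theta) -> A theta') : Prop :=
  multilinear f /\
  forall (e : 'I_l -> bool) (a : 'I_l -> A theta),
    (forall i, Ahomog (e i)%:Z (a i)) ->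
    Ahomog ((\sum_(i < l) (e i : nat))%:Z - l%:Z + k + 1) (f a).

Definition normal (f : ('I_l -> A theta) -> A theta') : Prop :=
  forall (a : 'I_l -> A theta) (i : 'I_l), a i = Aone theta -> f a = 0.

(* The differential of B^l(A_theta) with Koszul signs:
   d(a_1 (x) ... (x) a_l) = sum_i (-1)^{|a_1|+...+|a_(i-1)|} a_1 (x) .. (x) d a_i (x) .. (x) a_l,
   so that (f o d)(a) = sum_i f(eps a_1, .., eps a_(i-1), d a_i, a_(i+1), .., a_l). *)
Definition Bd_arg (a : 'I_l -> A theta) (i : 'I_l) : 'I_l -> A theta :=
  fun j => if (j < i)%N then Asign (a j)
           else if j == i then Ad (a j) else a j.

Definition dcoch (f : ('I_l -> A theta) -> A theta') : ('I_l -> A theta) -> A theta' :=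
  fun a => \sum_(i < l) f (Bd_arg a i).

End Cochains.

From HB Require Import structures.
From mathcomp Require Import all_boot all_order all_algebra.
From mathcomp Require Import mpoly.
From mathcomp Require Import reals.
From mathcomp Require Import zify.
From Stdlib Require Import FunctionalExtensionality.
Import GRing.Theory Num.Theory.
Local Open Scope ring_scope.

Set Implicit Arguments.
Unset Strict Implicit.
Unset Printing Implicit Defensive.

(* The differential of A_theta is the de Rham differential on polynomial
   functions and 1-forms.  Integrating against the Euler vector field gives a
   homotopy s with s d + d s = 1 - pi, where pi keeps the constant term of a
   function and kills exact 1-forms (Poincare lemma).  Putting s in
   slot j, pi eps in the slots before it and the identity after it, and summing
   over j, turns a cocycle f into a cochain g with g o d = f - f o pi^{(x) l}.
   Normality removes the constant parts of the pi(a_i), so f o pi^{(x) l} only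
   sees 1-forms in all l slots, where a cochain of degree k > 0 lands in
   A-degree k + 1 >= 2 and hence vanishes.  The same normality and degree
   bookkeeping show that g is normal of degree k - 1. *)

Section PoincareLemma.
Variables (R : numFieldType) (n : nat).
Local Notation P := {mpoly R[n]}.
Local Notation form := {ffun 'I_n -> P}.

Lemma mcoeff_reweight (c : 'X_{1..n} -> R) (p : P) m :
  (\sum_(m' <- msupp p) (c m' * p@_m') *: 'X_[m'] : P)@_m = c m * p@_m.
Proof.
rewrite raddf_sum /=; under eq_bigr do rewrite mcoeffZ mcoeffX.
have [mp|mNp] := boolP (m \in msupp p).
  rewrite (bigD1_seq m) ?msupp_uniq //= eqxx mulr1 big1 ?addr0 // => m'.
  by move=> /negbTE ->; rewrite mulr0.
move: (mNp); rewrite -mcoeff_eq0 => /eqP ->; rewrite mulr0 big_seq big1 // => m' m'p.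
by case: eqVneq m'p => [->|]; rewrite ?(negbTE mNp) ?mulr0.
Qed.

(* The constant term is sent to 0, since [0%:R^-1 = 0]. *)
Definition euler_inv (p : P) : P :=
  \sum_(m <- msupp p) ((mdeg m)%:R^-1 * p@_m) *: 'X_[m].

Lemma mcoeff_euler_inv p m : (euler_inv p)@_m = (mdeg m)%:R^-1 * p@_m.
Proof. exact: mcoeff_reweight. Qed.

Lemma euler_inv_is_linear : linear euler_inv.
Proof.
move=> c p q; apply/mpolyP => m.
by rewrite mcoeffD mcoeffZ !mcoeff_euler_inv mcoeffD mcoeffZ mulrDr mulrCA.
Qed.

HB.instance Definition _ :=
  GRing.isLinear.Build R P P _ euler_inv euler_inv_is_linear.

Definition mgrad (p : P) : form := [ffun i => mderiv i p].

Lemma mgrad_is_linear : linear mgrad.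
Proof. by move=> c p q; apply/ffunP => i; rewrite !ffunE linearP. Qed.

HB.instance Definition _ := GRing.isLinear.Build R P form _ mgrad mgrad_is_linear.

Lemma mgradC c : mgrad c%:MP = 0.
Proof. by apply/ffunP => i; rewrite !ffunE mderivC. Qed.

Definition contract_euler (w : form) : P := \sum_i 'X_i * w i.

Lemma contract_euler_is_linear : linear contract_euler.
Proof.
move=> c w v; rewrite /contract_euler scaler_sumr -big_split /=.
by apply: eq_bigr => i _; rewrite !ffunE mulrDr scalerAr.
Qed.

HB.instance Definition _ :=
  GRing.isLinear.Build R form P _ contract_euler contract_euler_is_linear.

Lemma contract_euler_mgradX m :
  contract_euler (mgrad 'X_[m]) = (mdeg m)%:R *: 'X_[m].
Proof.
rewrite mdegE natr_sum scaler_suml; apply: eq_bigr => i _.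
rewrite ffunE mderivX -scalerAr -mpolyXD.
have [mi_gt0|] := ltnP 0 (m i); last by rewrite leqn0 => /eqP ->; rewrite !scale0r.
congr (_ *: 'X_[_]); apply/mnmP => j; rewrite mnmDE mnmBE mnm1E.
by case: (eqVneq i j) => [<-|]; rewrite ?subn0 // add1n subn1 prednK.
Qed.

Lemma mcoeff_contract_euler_mgrad p m :
  (contract_euler (mgrad p))@_m = (mdeg m)%:R * p@_m.
Proof.
have -> : contract_euler (mgrad p) =
    \sum_(m' <- msupp p) ((mdeg m')%:R * p@_m') *: 'X_[m'].
  rewrite {1}(mpolyE p) (raddf_sum mgrad) (raddf_sum contract_euler).
  apply: eq_bigr => m' _.
  by rewrite /= !linearZ_LR /= contract_euler_mgradX scalerA mulrC.
exact: mcoeff_reweight.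
Qed.

Definition poincare (w : form) : P := euler_inv (contract_euler w).

Lemma poincare_is_linear : linear poincare.
Proof. by move=> c w v; rewrite /poincare !linearP. Qed.

HB.instance Definition _ :=
  GRing.isLinear.Build R form P _ poincare poincare_is_linear.

Lemma poincare_mgrad p : poincare (mgrad p) = p - (p@_0%MM)%:MP.
Proof.
apply/mpolyP => m; rewrite mcoeff_euler_inv mcoeff_contract_euler_mgrad.
rewrite mcoeffB mcoeffC mulrA; case: (eqVneq m 0%MM) => [->|m_neq0].
  by rewrite mdeg0 invr0 !mul0r mulr1 subrr.
by rewrite mulVf ?mul1r ?mulr0 ?subr0 // pnatr_eq0 mdeg_eq0.
Qed.

End PoincareLemma.

Section ContractingHomotopy.
Variables (R : realType) (n : nat) (theta : 'M[R]_n).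

Definition Ahtp (a : A theta) : A theta := (poincare a.2, 0).

Definition Aproj (a : A theta) : A theta :=
  ((a.1@_0%MM)%:MP, a.2 - mgrad (poincare a.2)).

Lemma AdE (a : A theta) : Ad a = (0, mgrad a.1).
Proof. by []. Qed.

Lemma Ahtp_Ad_homotopy (a : A theta) : Ahtp (Ad a) + Ad (Ahtp a) = a - Aproj a.
Proof.
rewrite !AdE; apply: injective_projections => /=.
  by rewrite poincare_mgrad addr0.
by rewrite add0r opprB addrC subrK.
Qed.

Lemma Aproj_Ad (a : A theta) : Aproj (Ad a) = 0.
Proof.
rewrite AdE; apply: injective_projections => /=; first by rewrite mcoeff0.
by rewrite poincare_mgrad linearB /= mgradC subr0 subrr.
Qed.

Lemma Ad_Aproj (a : A theta) : Ad (Aproj a) = 0.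
Proof. by rewrite AdE mgradC. Qed.

Lemma Asign_Ad (a : A theta) : Asign (Ad a) = Ad a.
Proof. by rewrite /Asign /= oppr0. Qed.

Lemma Asign_involutive : involutive (@Asign R n theta).
Proof. by case=> a0 a1; rewrite /Asign /= opprK. Qed.

Lemma Aproj_Asign (a : A theta) : Aproj (Asign a) = Asign (Aproj a).
Proof. by rewrite /Aproj /Asign /= mcoeffN mpolyCN. Qed.

Lemma Ahtp_Asign (a : A theta) : Ahtp (Asign a) = Ahtp a.
Proof. by []. Qed.

Lemma Asign_Ahtp (a : A theta) : Asign (Ahtp a) = - Ahtp a.
Proof. by apply: injective_projections; rewrite /= ?oppr0. Qed.

Lemma Ahtp_eq0 (a : A theta) : a.2 = 0 -> Ahtp a = 0.
Proof. by rewrite /Ahtp => ->; rewrite linear0. Qed.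

Lemma Aproj_Aone : Aproj (Aone theta) = Aone theta.
Proof. by rewrite /Aproj /Aone /= mcoeff1 eqxx linear0 linear0 subr0. Qed.

Lemma Asign_Aone : Asign (Aone theta) = - Aone theta.
Proof. by apply: injective_projections; rewrite /= ?oppr0. Qed.

Lemma Asign_is_linear : linear (@Asign R n theta).
Proof. by move=> c a b; apply: injective_projections; rewrite /= ?scalerN ?opprD. Qed.

Lemma Aproj_is_linear : linear Aproj.
Proof.
move=> c a b; apply: injective_projections => /=.
  by rewrite mcoeffD mcoeffZ mpolyCD -mul_mpolyC mpolyCM mul_mpolyC.
by rewrite !linearP /= scalerBr -scalerN addrACA.
Qed.

Lemma Ahtp_is_linear : linear Ahtp.
Proof.
by move=> c a b; apply: injective_projections; rewrite /= ?linearP ?scaler0 ?addr0.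
Qed.

Lemma Ahomog_bool (b : bool) (a : A theta) :
  Ahomog (b : nat)%:Z a = if b then a.1 == 0 else a.2 == 0.
Proof. by case: b. Qed.

Lemma Asign_homog (b : bool) (a : A theta) :
  Ahomog (b : nat)%:Z a -> Ahomog (b : nat)%:Z (Asign a).
Proof. by rewrite !Ahomog_bool; case: b => //= /eqP ->; rewrite oppr0. Qed.

Lemma Aproj_homog (b : bool) (a : A theta) :
  Ahomog (b : nat)%:Z a -> Ahomog (b : nat)%:Z (Aproj a).
Proof.
rewrite !Ahomog_bool; case: b => /eqP /= ->; first by rewrite mcoeff0.
by rewrite !linear0 addr0.
Qed.

Lemma Ahtp_homog (a : A theta) : Ahomog 0 (Ahtp a).
Proof. by rewrite /Ahomog eqxx. Qed.

Lemma Ahomog0 (t : int) : Ahomog t (0 : A theta).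
Proof. by rewrite /Ahomog; case: (t == 0); [|case: (t == 1)]. Qed.

Lemma AhomogD (t : int) (x y : A theta) :
  Ahomog t x -> Ahomog t y -> Ahomog t (x + y).
Proof.
rewrite /Ahomog; case: (t == 0); [|case: (t == 1)] => /eqP hx /eqP hy;
  by rewrite /= hx hy addr0.
Qed.

Lemma Ahomog_sum (I : Type) (r : seq I) (P : pred I) (t : int) (F : I -> A theta) :
  (forall i, P i -> Ahomog t (F i)) -> Ahomog t (\sum_(i <- r | P i) F i).
Proof.
move=> homF; apply: (big_rec (Ahomog t)); first exact: Ahomog0.
by move=> i x /homF; exact: AhomogD.
Qed.

End ContractingHomotopy.

Section Multilinear.
Variables (R : realType) (n l : nat) (theta theta' : 'M[R]_n).
Variable f : ('I_l -> A theta) -> A theta'.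
Hypothesis f_multilinear : multilinear f.

Lemma upd_eta (a : 'I_l -> A theta) i : upd a i (a i) = a.
Proof. by apply: functional_extensionality => j; rewrite /upd; case: eqP => [->|]. Qed.

Lemma upd_eq (a : 'I_l -> A theta) i x : upd a i x i = x.
Proof. by rewrite /upd eqxx. Qed.

Lemma multilinearD (a : 'I_l -> A theta) i x y :
  f (upd a i (x + y)) = f (upd a i x) + f (upd a i y).
Proof. by have := f_multilinear a i 1 x y; rewrite !scale1r. Qed.

Lemma multilinear0 (a : 'I_l -> A theta) i : a i = 0 -> f a = 0.
Proof.
move=> ai0; have := multilinearD a i 0 0; rewrite addr0 -ai0 upd_eta.
by move=> /esym/eqP; rewrite -subr_eq0 addrK => /eqP ->.
Qed.

Lemma multilinearN (a : 'I_l -> A theta) i x : f (upd a i (- x)) = - f (upd a i x).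
Proof.
have := multilinearD a i x (- x); rewrite subrr (multilinear0 (upd_eq _ _ _)).
by move=> /esym/eqP; rewrite addrC addr_eq0 => /eqP ->.
Qed.

End Multilinear.

Section CochainHomotopy.
Variables (R : realType) (n l : nat) (theta theta' : 'M[R]_n).
Variable f : ('I_l -> A theta) -> A theta'.
Hypothesis f_multilinear : multilinear f.

(* The sign in the slots left of [j] absorbs the Koszul signs of [Bd_arg]. *)
Definition htp_op (i j : 'I_l) (x : A theta) : A theta :=
  if (i < j)%N then Aproj (Asign x) else if i == j then Ahtp x else x.

Definition htp_args (j : 'I_l) (a : 'I_l -> A theta) : 'I_l -> A theta :=
  fun i => htp_op i j (a i).

Definition proj_prefix (j : nat) (a : 'I_l -> A theta) : 'I_l -> A theta :=
  fun i => if (i < j)%N then Aproj (a i) else a i.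

Definition htp (a : 'I_l -> A theta) : A theta' := \sum_(j < l) f (htp_args j a).

Lemma htp_dcoch_term_lt (i j : 'I_l) a : (i < j)%N ->
  f (htp_args j (Bd_arg a i)) + f (Bd_arg (htp_args j a) i) = 0.
Proof.
move=> lt_ij; rewrite (multilinear0 f_multilinear (i := i)); last first.
  by rewrite /htp_args /htp_op /Bd_arg lt_ij ltnn eqxx Asign_Ad Aproj_Ad.
rewrite (multilinear0 f_multilinear (i := i)) ?addr0 //.
by rewrite /htp_args /htp_op /Bd_arg lt_ij ltnn eqxx Ad_Aproj.
Qed.

Lemma htp_dcoch_term_gt (i j : 'I_l) a : (j < i)%N ->
  f (htp_args j (Bd_arg a i)) + f (Bd_arg (htp_args j a) i) = 0.
Proof.
move=> lt_ji; set b := Bd_arg (htp_args j a) i.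
have bj : b j = - Ahtp (a j).
  by rewrite /b /Bd_arg /htp_args /htp_op lt_ji ltnn eqxx Asign_Ahtp.
suff -> : htp_args j (Bd_arg a i) = upd b j (- b j).
  by rewrite (multilinearN f_multilinear) upd_eta addNr.
apply: functional_extensionality => k.
rewrite bj opprK /b /upd /Bd_arg /htp_args /htp_op -!val_eqE /=.
case: (ltngtP k j) => kj; case: (ltngtP k i) => ki //=; try lia.
- by rewrite Asign_involutive Aproj_Asign Asign_involutive.
- by rewrite Ahtp_Asign; congr (Ahtp (a _)); apply: val_inj.
Qed.

Lemma htp_dcoch_term_eq (j : 'I_l) a :
  f (htp_args j (Bd_arg a j)) + f (Bd_arg (htp_args j a) j) =
  f (proj_prefix j a) - f (proj_prefix j.+1 a).
Proof.
set c := proj_prefix j a.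
have -> : htp_args j (Bd_arg a j) = upd c j (Ahtp (Ad (a j))).
  apply: functional_extensionality => k.
  rewrite /c /upd /proj_prefix /Bd_arg /htp_args /htp_op -!val_eqE /=.
  case: (ltngtP k j) => kj //=; first by rewrite Asign_involutive.
  by congr (Ahtp (Ad (a _))); apply: val_inj.
have -> : Bd_arg (htp_args j a) j = upd c j (Ad (Ahtp (a j))).
  apply: functional_extensionality => k.
  rewrite /c /upd /proj_prefix /Bd_arg /htp_args /htp_op -!val_eqE /=.
  case: (ltngtP k j) => kj //=.
    by rewrite Aproj_Asign Asign_involutive.
  by congr (Ad (Ahtp (a _))); apply: val_inj.
have -> : proj_prefix j.+1 a = upd c j (Aproj (a j)).
  apply: functional_extensionality => k.
  rewrite /c /upd /proj_prefix -!val_eqE /= ltnS.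
  by case: (ltngtP k j) => kj //=; congr (Aproj (a _)); apply: val_inj.
rewrite -(multilinearD f_multilinear) Ahtp_Ad_homotopy.
have cj : a j = c j by rewrite /c /proj_prefix ltnn.
rewrite (multilinearD f_multilinear) (multilinearN f_multilinear).
by rewrite [in upd c j (a j)]cj upd_eta.
Qed.

Lemma htp_dcoch_term (i j : 'I_l) a :
  f (htp_args j (Bd_arg a i)) + f (Bd_arg (htp_args j a) i) =
  if i == j then f (proj_prefix j a) - f (proj_prefix j.+1 a) else 0.
Proof.
have [->|neq_ij] := eqVneq i j; first exact: htp_dcoch_term_eq.
case: (ltngtP i j) => [lt_ij|lt_ji|/val_inj eq_ij].
- exact: htp_dcoch_term_lt.
- exact: htp_dcoch_term_gt.
- by rewrite eq_ij eqxx in neq_ij.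
Qed.

Lemma dcoch_htp (f_cocycle : forall a, dcoch f a = 0) a :
  dcoch htp a = f a - f (fun i => Aproj (a i)).
Proof.
have column j : \sum_(i < l) f (htp_args j (Bd_arg a i)) =
    f (proj_prefix j a) - f (proj_prefix j.+1 a).
  rewrite -[LHS]addr0 -{2}(f_cocycle (htp_args j a)) -big_split /=.
  under eq_bigr do rewrite htp_dcoch_term.
  by rewrite -big_mkcond big_pred1_eq.
rewrite /dcoch /htp exchange_big /=; under eq_bigr do rewrite column.
rewrite -(big_mkord xpredT (fun j => f (proj_prefix j a) - f (proj_prefix j.+1 a))).
rewrite (@telescope_sumr_eq _ 0 l (fun j => - f (proj_prefix j a))) //; last first.
  by move=> j _; rewrite opprK addrC.
have -> : proj_prefix l a = fun i => Aproj (a i).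
  by apply: functional_extensionality => i; rewrite /proj_prefix ltn_ord.
by rewrite opprK addrC.
Qed.

Lemma htp_op_is_linear (i j : 'I_l) : linear (htp_op i j).
Proof.
move=> c x y; rewrite /htp_op; case: ifP => _; last case: ifP => _ //.
  by rewrite Asign_is_linear Aproj_is_linear.
exact: Ahtp_is_linear.
Qed.

Lemma htp_args_upd j a i x :
  htp_args j (upd a i x) = upd (htp_args j a) i (htp_op i j x).
Proof.
by apply: functional_extensionality => k; rewrite /htp_args /upd; case: eqVneq => [->|].
Qed.

Lemma htp_multilinear : multilinear htp.
Proof.
move=> a i c x y; rewrite /htp scaler_sumr -big_split; apply: eq_bigr => j _ /=.
by rewrite !htp_args_upd htp_op_is_linear f_multilinear.
Qed.

Lemma htp_normal : normal f -> normal htp.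
Proof.
move=> f_normal a i ai1; apply: big1 => j _.
case: (ltngtP i j) => [lt_ij|lt_ji|/val_inj eq_ij].
- have -> : htp_args j a = upd (htp_args j a) i (- Aone theta).
    rewrite -[in LHS](upd_eta (htp_args j a) i); congr upd.
    by rewrite /htp_args /htp_op lt_ij ai1 Aproj_Asign Aproj_Aone Asign_Aone.
  by rewrite (multilinearN f_multilinear) (f_normal _ i) ?oppr0 ?upd_eq.
- apply: (f_normal _ i).
  by rewrite /htp_args /htp_op ltnNge (ltnW lt_ji) -val_eqE /= gtn_eqF.
- apply: (multilinear0 f_multilinear (i := j)).
  by rewrite /htp_args /htp_op ltnn eqxx -eq_ij ai1 Ahtp_eq0.
Qed.

Lemma htp_homCochain k : homCochain k f -> homCochain (k - 1) htp.
Proof.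
case=> _ f_homog; split; first exact: htp_multilinear.
move=> e a a_homog; apply: Ahomog_sum => j _.
have [ej|/negbTE ej] := boolP (e j); last first.
  have := a_homog j; rewrite Ahomog_bool ej => /eqP aj2.
  rewrite (multilinear0 f_multilinear (i := j)) ?Ahomog0 //.
  by rewrite /htp_args /htp_op ltnn eqxx Ahtp_eq0.
pose e' k := (k != j) && e k.
have sum_e : (\sum_i (e i : nat) = (\sum_i (e' i : nat)).+1)%N.
  rewrite (bigD1 j) //= ej [in RHS](bigD1 j) //= /e' eqxx add0n add1n.
  by congr S; apply: eq_bigr => i ->.
have -> : (\sum_i (e i : nat))%:Z - l%:Z + (k - 1) + 1 =
          (\sum_i (e' i : nat))%:Z - l%:Z + k + 1 by rewrite sum_e; lia.
apply: f_homog => i; rewrite /htp_args /htp_op /e'.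
case: (ltngtP i j) => [lt_ij|lt_ji|/val_inj ->]; last by rewrite eqxx; exact: Ahtp_homog.
- by rewrite -val_eqE /= ltn_eqF //; exact: Aproj_homog (Asign_homog (a_homog i)).
- by rewrite -val_eqE /= gtn_eqF //; exact: a_homog.
Qed.

End CochainHomotopy.

Section NormalCochainsVanish.
Variables (R : realType) (n l : nat) (theta theta' : 'M[R]_n) (k : int).
Variable f : ('I_l -> A theta) -> A theta'.
Hypotheses (k_gt0 : 0 < k) (f_hom : homCochain k f) (f_normal : normal f).

Lemma homCochain_vanish_on_forms (a : 'I_l -> A theta) :
  (forall i, (a i).1 = 0) -> f a = 0.
Proof.
case: f_hom => _ f_homog a1; have := f_homog (fun=> true) a.
rewrite sum_nat_const card_ord muln1 subrr add0r /Ahomog.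
have /negbTE-> : k + 1 != 0 by apply/eqP; lia.
have /negbTE-> : k + 1 != 1 by apply/eqP; lia.
by move=> homf; apply/eqP/homf => i /=; rewrite a1.
Qed.

Lemma normal_vanish_on_const_forms
    (c : 'I_l -> R) (w : 'I_l -> {ffun 'I_n -> {mpoly R[n]}}) :
  f (fun i => ((c i)%:MP, w i)) = 0.
Proof.
have f_multilinear := proj1 f_hom.
(* Strip the constants slot by slot: by normality [c i *: 1] contributes nothing. *)
suff: forall d (c : 'I_l -> R), (forall i : 'I_l, (d <= i)%N -> c i = 0) ->
    f (fun i => ((c i)%:MP, w i)) = 0.
  by move=> vanish; apply: (vanish l) => i; rewrite leqNgt ltn_ord.
elim=> [|d IHd] {}c c_eq0.
  by apply: homCochain_vanish_on_forms => i /=; rewrite c_eq0 ?mpolyC0.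
have [le_ld|lt_dl] := leqP l d.
  by apply: IHd => i /(leq_trans le_ld); rewrite leqNgt ltn_ord.
set i0 : 'I_l := Ordinal lt_dl.
pose c' i := if i == i0 then 0 else c i.
have -> : (fun i => ((c i)%:MP, w i)) =
    upd (fun i => ((c' i)%:MP, w i)) i0 (c i0 *: Aone theta + (0, w i0)).
  apply: functional_extensionality => i; rewrite /upd /c'.
  case: eqVneq => [->|_] //; apply: injective_projections => /=.
    by rewrite addr0 -mul_mpolyC mulr1.
  by rewrite scaler0 add0r.
rewrite f_multilinear (@f_normal _ i0) ?upd_eq // scaler0 add0r.
have -> : (0, w i0) = ((c' i0)%:MP, w i0) :> A theta by rewrite /c' eqxx mpolyC0.
rewrite upd_eta; apply: IHd => i le_di; rewrite /c'.
by case: eqVneq => [//|ne_ii0]; apply: c_eq0; rewrite ltn_neqAle le_di andbT eq_sym.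
Qed.

End NormalCochainsVanish.

Theorem mainTheorem4 (R : realType) (n : nat) (theta theta' : 'M[R]_n)
  (Htheta : antisym theta) (Htheta' : antisym theta') (l : nat) (hl : (1 <= l)%N)
  (k : int) (hk : 0 < k)
  (f : ('I_l -> A theta) -> A theta')
  (hf : homCochain k f) (hfn : normal f) (hfc : forall a, dcoch f a = 0) :
  exists g : ('I_l -> A theta) -> A theta',
    [/\ homCochain (k - 1) g, normal g & forall a, dcoch g a = f a].
Proof.
have f_multilinear := proj1 hf.
exists (htp f); split.
- exact: htp_homCochain.
- exact: htp_normal.
move=> a; rewrite dcoch_htp //.
have -> : f (fun i => Aproj (a i)) = 0.
  exact: (normal_vanish_on_const_forms hk hf hfn (fun i => _)
    (fun i => (Aproj (a i)).2)).
by rewrite subr0.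
Qed.
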